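(* Let $Q$ be a propositional proof system extending $CF$ that is not sound (i.e. $Q$ proves some proposition that is not a tautology). Then $Q$ proves every proposition by a proof of length linear in the length of the proposition.
   Context: Here a (possibly unsound) proof system extending $CF$ is the Circuit Frege system $CF$ (Frege rules on Boolean circuits plus a rule passing from a circuit to any circuit unfolding to the same formula) augmented with a polynomial-time decidable set of axiom schemas, any substitution instance of which may be used as an axiom. Propositions are Boolean circuits. *)

From Stdlib Require Import List Arith.
Import ListNotations.

Inductive fml : Type :=
| FVar (n : nat) | FTop | FBot
| FNot (a : fml) | FAnd (a b : fml) | FOr (a b : fml) | FImp (a b : fml).

Fixpoint feval (v : nat -> bool) (f : fml) : bool :=
  match f with
  | FVar n => v n
  | FTop => true
  | FBot => false
  | FNot a => negb (feval v a)
  | FAnd a b => feval v a && feval v b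
  | FOr a b => feval v a || feval v b
  | FImp a b => implb (feval v a) (feval v b)
  end.

(** Boolean circuits, represented as straight-line terms with explicit
    sharing: [CLet c d] is the circuit [d] in which the gate [c] may be
    referred to (any number of times) by the de Bruijn reference [CRef 0]
    (references to enclosing lets are shifted as usual). *)
Inductive circ : Type :=
| CVar (n : nat) | CRef (k : nat) | CTop | CBot
| CNot (a : circ) | CAnd (a b : circ) | COr (a b : circ) | CImp (a b : circ)
| CLet (a b : circ).

Fixpoint wf (d : nat) (c : circ) : bool :=
  match c with
  | CRef k => Nat.ltb k d
  | CVar _ | CTop | CBot => true
  | CNot a => wf d a
  | CAnd a b | COr a b | CImp a b => wf d a && wf d b
  | CLet a b => wf d a && wf (S d) b
  end.

(** Propositions are closed circuits. *)
Definition closed (c : circ) : Prop := wf 0 c = true.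

Fixpoint csize (c : circ) : nat :=
  match c with
  | CVar _ | CRef _ | CTop | CBot => 1
  | CNot a => S (csize a)
  | CAnd a b | COr a b | CImp a b | CLet a b => S (csize a + csize b)
  end.

Fixpoint unfold (env : list fml) (c : circ) : fml :=
  match c with
  | CVar n => FVar n
  | CRef k => nth k env FBot
  | CTop => FTop
  | CBot => FBot
  | CNot a => FNot (unfold env a)
  | CAnd a b => FAnd (unfold env a) (unfold env b)
  | COr a b => FOr (unfold env a) (unfold env b)
  | CImp a b => FImp (unfold env a) (unfold env b)
  | CLet a b => unfold (unfold env a :: env) b
  end.

Definition tautology (c : circ) : Prop :=
  forall v : nat -> bool, feval v (unfold [] c) = true.

Fixpoint inst (s : nat -> circ) (c : circ) : circ :=
  match c with
  | CVar n => s n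
  | CRef k => CRef k
  | CTop => CTop
  | CBot => CBot
  | CNot a => CNot (inst s a)
  | CAnd a b => CAnd (inst s a) (inst s b)
  | COr a b => COr (inst s a) (inst s b)
  | CImp a b => CImp (inst s a) (inst s b)
  | CLet a b => CLet (inst s a) (inst s b)
  end.

Definition p := CVar 0.
Definition q := CVar 1.
Definition r := CVar 2.

Definition frege_axioms : list circ :=
  [ CImp p (CImp q p);
    CImp (CImp p (CImp q r)) (CImp (CImp p q) (CImp p r));
    CImp (CAnd p q) p;
    CImp (CAnd p q) q;
    CImp p (CImp q (CAnd p q));
    CImp p (COr p q);
    CImp q (COr p q);
    CImp (CImp p r) (CImp (CImp q r) (CImp (COr p q) r));
    CImp CBot p;
    CTop;
    CImp (CImp p CBot) (CNot p);
    CImp (CNot p) (CImp p CBot);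
    CImp (CImp (CImp p CBot) CBot) p ].

(** The proof system Q = CF + the (decidable) set [Ax] of extra axiom schemas.
    [C] is an axiom of Q if it is a substitution instance (by closed circuits)
    of a Frege axiom schema or of a schema in [Ax]. *)
Definition is_axiom (Ax : circ -> bool) (C : circ) : Prop :=
  exists (phi : circ) (s : nat -> circ),
    (In phi frege_axioms \/ Ax phi = true) /\
    (forall n, closed (s n)) /\
    C = inst s phi.

(** A Q-proof is a sequence of propositions each of which is an axiom,
    follows by modus ponens from two earlier lines, or follows from an
    earlier line unfolding to the same formula (the CF unfolding rule). *)
Definition valid_proof (Ax : circ -> bool) (pi : list circ) : Prop :=
  forall i, i < length pi ->
    let C := nth i pi CTop in
    closed C /\
    (is_axiom Ax C \/
     (exists j k, j < i /\ k < i /\ nth k pi CTop = CImp (nth j pi CTop) C) \/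
     (exists j, j < i /\ unfold [] (nth j pi CTop) = unfold [] C)).

Definition proves (Ax : circ -> bool) (pi : list circ) (A : circ) : Prop :=
  pi <> [] /\ valid_proof Ax pi /\ last pi CTop = A.

Definition plen (pi : list circ) : nat :=
  fold_right (fun C n => csize C + n) 0 pi.

Definition sound (Ax : circ -> bool) : Prop :=
  forall pi A, proves Ax pi A -> tautology A.

(* An unsound Q proves some non-tautology A, falsified by an assignment v.
   Substituting the truth constants given by v for the variables of A turns
   the Q-proof of A into a Q-proof of a variable-free proposition that unfolds
   to a false formula; by Kalmar's lemma CF refutes that formula, so Q proves
   bot by a proof of fixed size.  Appending the axiom [bot -> B] and [B]
   itself proves an arbitrary B in size linear in that of B. *)

From Stdlib Require Import List Arith Bool Lia Classical.
Import ListNotations.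

Lemma wf_mono c d d' : wf d c = true -> d <= d' -> wf d' c = true.
Proof.
  revert d d'; induction c; simpl; intros d d' H Hle;
    rewrite ?andb_true_iff in *; intuition eauto.
  - apply Nat.ltb_lt in H; apply Nat.ltb_lt; lia.
  - apply (IHc2 (S d)); auto with arith.
Qed.

Lemma unfold_agree c d e1 e2 : wf d c = true ->
  (forall k, k < d -> nth k e1 FBot = nth k e2 FBot) ->
  unfold e1 c = unfold e2 c.
Proof.
  revert d e1 e2; induction c; simpl; intros d e1 e2 Hwf He;
    rewrite ?andb_true_iff in Hwf; try reflexivity.
  - apply He, Nat.ltb_lt, Hwf.
  - erewrite IHc by eauto; reflexivity.
  - destruct Hwf; erewrite IHc1, IHc2 by eauto; reflexivity.
  - destruct Hwf; erewrite IHc1, IHc2 by eauto; reflexivity.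
  - destruct Hwf; erewrite IHc1, IHc2 by eauto; reflexivity.
  - destruct Hwf as [H1 H2]; apply (IHc2 (S d)); [exact H2|].
    intros [|k] Hk; simpl; [eauto|apply He; lia].
Qed.

Lemma unfold_closed c env : closed c -> unfold env c = unfold [] c.
Proof. intro Hc; apply (unfold_agree c 0); [exact Hc|lia]. Qed.

Lemma wf_inst s c d : (forall n, closed (s n)) -> wf d c = true -> wf d (inst s c) = true.
Proof.
  intro Hs; revert d; induction c; simpl; intros d H;
    rewrite ?andb_true_iff in *; intuition auto.
  apply (wf_mono _ 0); [apply Hs|lia].
Qed.

Lemma closed_inst s c : (forall n, closed (s n)) -> closed c -> closed (inst s c).
Proof. apply wf_inst. Qed.

Lemma inst_inst s1 s2 c : inst s1 (inst s2 c) = inst (fun n => inst s1 (s2 n)) c.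
Proof. induction c; simpl; congruence. Qed.

Fixpoint fsub (t : nat -> fml) (f : fml) : fml :=
  match f with
  | FVar n => t n
  | FTop => FTop
  | FBot => FBot
  | FNot a => FNot (fsub t a)
  | FAnd a b => FAnd (fsub t a) (fsub t b)
  | FOr a b => FOr (fsub t a) (fsub t b)
  | FImp a b => FImp (fsub t a) (fsub t b)
  end.

Lemma unfold_inst_env s t c env : (forall n, closed (s n)) ->
  (forall n, unfold [] (s n) = t n) ->
  unfold (map (fsub t) env) (inst s c) = fsub t (unfold env c).
Proof.
  intros Hs Ht; revert env; induction c; simpl; intro env; try congruence.
  - rewrite unfold_closed; auto.
  - exact (map_nth (fsub t) env FBot k).
  - rewrite IHc1; apply (IHc2 (unfold env c1 :: env)).
Qed.

Lemma unfold_inst s t c : (forall n, closed (s n)) ->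
  (forall n, unfold [] (s n) = t n) ->
  unfold [] (inst s c) = fsub t (unfold [] c).
Proof. apply (unfold_inst_env s t c []). Qed.

Fixpoint ground (v : nat -> bool) (f : fml) : circ :=
  match f with
  | FVar n => if v n then CTop else CBot
  | FTop => CTop
  | FBot => CBot
  | FNot a => CNot (ground v a)
  | FAnd a b => CAnd (ground v a) (ground v b)
  | FOr a b => COr (ground v a) (ground v b)
  | FImp a b => CImp (ground v a) (ground v b)
  end.

Definition fconst (v : nat -> bool) (n : nat) : fml := if v n then FTop else FBot.

Lemma closed_ground v f : closed (ground v f).
Proof.
  unfold closed; induction f; simpl; rewrite ?andb_true_iff; auto.
  destruct (v n); reflexivity.
Qed.

Lemma unfold_ground v f env : unfold env (ground v f) = fsub (fconst v) f.
Proof.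
  induction f; simpl; try congruence.
  unfold fconst; destruct (v n); reflexivity.
Qed.

Lemma plen_app l1 l2 : plen (l1 ++ l2) = plen l1 + plen l2.
Proof. induction l1; simpl; lia. Qed.

Lemma csize_pos c : 1 <= csize c.
Proof. destruct c; simpl; lia. Qed.

Lemma closed_imp X Y : closed (CImp X Y) <-> closed X /\ closed Y.
Proof. apply andb_true_iff. Qed.

Lemma closed_bot : closed CBot.
Proof. reflexivity. Qed.

Lemma last_in (l : list circ) d : l <> [] -> In (last l d) l.
Proof.
  intro Hne; destruct (exists_last Hne) as (l' & x & ->).
  rewrite last_last; apply in_or_app; simpl; auto.
Qed.

Section Derivability.

Variable Ax : circ -> bool.

Inductive derivable : circ -> Prop :=
| der_axiom C : closed C -> is_axiom Ax C -> derivable C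
| der_mp X Y : derivable X -> derivable (CImp X Y) -> derivable Y
| der_unfold X Y : derivable X -> closed Y -> unfold [] X = unfold [] Y -> derivable Y.

Arguments der_mp {X Y}.

Lemma derivable_closed C : derivable C -> closed C.
Proof. induction 1; auto. apply closed_imp in IHderivable2; tauto. Qed.

Lemma derivable_imp_closed {X Y} : derivable (CImp X Y) -> closed X /\ closed Y.
Proof. intro H; apply closed_imp, derivable_closed, H. Qed.

Lemma derivable_inst s C : (forall n, closed (s n)) -> derivable C -> derivable (inst s C).
Proof.
  intros Hs; induction 1 as [C Hc (phi & s' & Hphi & Hs' & ->)| X Y _ IHX _ IHXY
                            | X Y _ IHX HY E].
  - apply der_axiom; [now apply closed_inst|].
    exists phi, (fun n => inst s (s' n)); repeat split; auto using inst_inst.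
    intro n; now apply closed_inst.
  - exact (der_mp IHX IHXY).
  - apply (der_unfold _ _ IHX); [now apply closed_inst|].
    rewrite !(unfold_inst s (fun n => unfold [] (s n))), E; auto.
Qed.

Definition justified (l : list circ) (C : circ) : Prop :=
  is_axiom Ax C \/
  (exists X, In X l /\ In (CImp X C) l) \/
  (exists X, In X l /\ unfold [] X = unfold [] C).

Lemma justified_app l1 l2 C : justified l2 C -> justified (l1 ++ l2) C.
Proof.
  intros [H | [(X & H1 & H2) | (X & H1 & H2)]]; [left | right; left | right; right];
    eauto; exists X; auto using in_or_app.
Qed.

Definition line_ok (pi : list circ) (i : nat) (C : circ) : Prop :=
  closed C /\
  (is_axiom Ax C \/
   (exists j k, j < i /\ k < i /\ nth k pi CTop = CImp (nth j pi CTop) C) \/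
   (exists j, j < i /\ unfold [] (nth j pi CTop) = unfold [] C)).

Lemma valid_proof_line_ok pi :
  valid_proof Ax pi <-> forall i, i < length pi -> line_ok pi i (nth i pi CTop).
Proof. reflexivity. Qed.

Lemma line_ok_ext pi pi' i C :
  (forall j, j < i -> nth j pi CTop = nth j pi' CTop) ->
  line_ok pi i C -> line_ok pi' i C.
Proof.
  intros E [Hc [H | [(j & k & Hj & Hk & H) | (j & Hj & H)]]]; split; auto.
  - right; left; exists j, k; rewrite <- !E; auto.
  - right; right; exists j; rewrite <- E; auto.
Qed.

Lemma line_ok_app pi pi' i C : i <= length pi ->
  line_ok (pi ++ pi') i C <-> line_ok pi i C.
Proof.
  intro Hi; split; apply line_ok_ext; intros j Hj; rewrite app_nth1 by lia; reflexivity.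
Qed.

Lemma line_ok_last l C : line_ok l (length l) C <-> closed C /\ justified l C.
Proof.
  split; intros [Hc H]; split; auto;
    destruct H as [H | [H | H]]; [left | right; left | right; right | left | right; left | right; right];
    auto.
  - destruct H as (j & k & Hj & Hk & E).
    exists (nth j l CTop); split; [|rewrite <- E]; apply nth_In; auto.
  - destruct H as (j & Hj & E); exists (nth j l CTop); split; auto using nth_In.
  - destruct H as (X & HX & HXC).
    destruct (In_nth _ _ CTop HX) as (j & Hj & <-).
    destruct (In_nth _ _ CTop HXC) as (k & Hk & E); eauto.
  - destruct H as (X & HX & E).
    destruct (In_nth _ _ CTop HX) as (j & Hj & <-); eauto.
Qed.

Lemma valid_proof_snoc l C :
  valid_proof Ax (l ++ [C]) <-> valid_proof Ax l /\ closed C /\ justified l C.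
Proof.
  rewrite !valid_proof_line_ok, <- line_ok_last.
  rewrite length_app; simpl; split.
  - intro H; split.
    + intros i Hi; rewrite <- (app_nth1 l [C] CTop Hi), <- (line_ok_app l [C]) by lia.
      apply H; lia.
    + specialize (H (length l)); rewrite nth_middle in H.
      apply (line_ok_app l [C]); [lia | apply H; lia].
  - intros [H HC] i Hi; rewrite line_ok_app by lia.
    destruct (Nat.eq_dec i (length l)) as [-> | Hne].
    + rewrite nth_middle; exact HC.
    + rewrite app_nth1 by lia; apply H; lia.
Qed.

Lemma valid_proof_app l1 l2 :
  valid_proof Ax l1 -> valid_proof Ax l2 -> valid_proof Ax (l1 ++ l2).
Proof.
  intro H1; induction l2 as [|C l2 IH] using rev_ind; intro H2.
  - now rewrite app_nil_r.
  - apply valid_proof_snoc in H2 as (H2 & HC & HJ).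
    rewrite app_assoc; apply valid_proof_snoc; auto using justified_app.
Qed.

Lemma valid_proof_derivable pi C : valid_proof Ax pi -> In C pi -> derivable C.
Proof.
  revert C; induction pi as [|Y pi IH] using rev_ind; [contradiction|].
  intros C H HC; apply valid_proof_snoc in H as (H & HY & HJ).
  apply in_app_or in HC as [HC | [<- | []]]; auto.
  destruct HJ as [HA | [(X & HX & HXY) | (X & HX & E)]].
  - now apply der_axiom.
  - exact (der_mp (IH X H HX) (IH _ H HXY)).
  - exact (der_unfold X Y (IH X H HX) HY E).
Qed.

Lemma proves_derivable pi C : proves Ax pi C -> derivable C.
Proof.
  intros (Hne & H & <-); destruct (exists_last Hne) as (l & Y & ->).
  rewrite last_last; apply (valid_proof_derivable _ _ H), in_or_app; simpl; auto.
Qed.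

Lemma proves_snoc l C : valid_proof Ax l -> closed C -> justified l C ->
  proves Ax (l ++ [C]) C.
Proof.
  intros; split; [|split].
  - apply not_eq_sym, app_cons_not_nil.
  - now apply valid_proof_snoc.
  - apply last_last.
Qed.

Lemma proves_axiom C : closed C -> is_axiom Ax C -> proves Ax [C] C.
Proof.
  intros Hc HA; apply (proves_snoc []); [intros i Hi; inversion Hi | exact Hc | now left].
Qed.

Lemma proves_mp pi1 pi2 X Y : proves Ax pi1 X -> proves Ax pi2 (CImp X Y) ->
  proves Ax ((pi1 ++ pi2) ++ [Y]) Y.
Proof.
  intros H1 H2; pose proof (proves_derivable _ _ H2) as HXY.
  destruct H1 as (N1 & V1 & L1), H2 as (N2 & V2 & L2).
  apply proves_snoc.
  - now apply valid_proof_app.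
  - apply derivable_imp_closed in HXY; tauto.
  - right; left; exists X; rewrite <- L1, <- L2 at 1.
    split; apply in_or_app; [left | right]; apply last_in; assumption.
Qed.

Lemma proves_unfold pi X Y : proves Ax pi X -> closed Y -> unfold [] X = unfold [] Y ->
  proves Ax (pi ++ [Y]) Y.
Proof.
  intros (N & V & L) HY E; apply proves_snoc; auto.
  right; right; exists X; rewrite <- L at 1; auto using last_in.
Qed.

Lemma derivable_proves C : derivable C -> exists pi, proves Ax pi C.
Proof.
  induction 1 as [C Hc HA | X Y _ [p1 H1] _ [p2 H2] | X Y _ [p1 H1] HY E].
  - exists [C]; now apply proves_axiom.
  - exists ((p1 ++ p2) ++ [Y]); now apply (proves_mp _ _ X).
  - exists (p1 ++ [Y]); now apply (proves_unfold _ X).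
Qed.

Definition subst3 (X Y Z : circ) (n : nat) : circ :=
  match n with 0 => X | 1 => Y | _ => Z end.

Lemma frege_instance_axiom k X Y Z : k < length frege_axioms ->
  closed X -> closed Y -> closed Z ->
  let C := inst (subst3 X Y Z) (nth k frege_axioms CTop) in closed C /\ is_axiom Ax C.
Proof.
  intros Hk HX HY HZ.
  assert (Hs : forall n, closed (subst3 X Y Z n)) by (intros [|[|]]; assumption).
  split.
  - apply closed_inst; [exact Hs|].
    do 13 (destruct k as [|k]; [reflexivity|]); simpl in Hk; lia.
  - exists (nth k frege_axioms CTop), (subst3 X Y Z); auto using nth_In.
Qed.

Lemma derivable_frege k X Y Z : k < length frege_axioms ->
  closed X -> closed Y -> closed Z ->
  derivable (inst (subst3 X Y Z) (nth k frege_axioms CTop)).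
Proof.
  intros; apply der_axiom; now apply frege_instance_axiom.
Qed.

Ltac frege_axiom k X Y Z :=
  apply (derivable_frege k X Y Z); simpl; (lia || assumption || reflexivity).

Lemma derivable_K X Y : closed X -> closed Y -> derivable (CImp X (CImp Y X)).
Proof. intros; frege_axiom 0 X Y CTop. Qed.

Lemma derivable_S X Y Z : closed X -> closed Y -> closed Z ->
  derivable (CImp (CImp X (CImp Y Z)) (CImp (CImp X Y) (CImp X Z))).
Proof. intros; frege_axiom 1 X Y Z. Qed.

Lemma derivable_and_elim_l X Y : closed X -> closed Y -> derivable (CImp (CAnd X Y) X).
Proof. intros; frege_axiom 2 X Y CTop. Qed.

Lemma derivable_and_elim_r X Y : closed X -> closed Y -> derivable (CImp (CAnd X Y) Y).
Proof. intros; frege_axiom 3 X Y CTop. Qed.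

Lemma derivable_and_intro X Y : closed X -> closed Y -> derivable (CImp X (CImp Y (CAnd X Y))).
Proof. intros; frege_axiom 4 X Y CTop. Qed.

Lemma derivable_or_intro_l X Y : closed X -> closed Y -> derivable (CImp X (COr X Y)).
Proof. intros; frege_axiom 5 X Y CTop. Qed.

Lemma derivable_or_intro_r X Y : closed X -> closed Y -> derivable (CImp Y (COr X Y)).
Proof. intros; frege_axiom 6 X Y CTop. Qed.

Lemma derivable_or_elim X Y Z : closed X -> closed Y -> closed Z ->
  derivable (CImp (CImp X Z) (CImp (CImp Y Z) (CImp (COr X Y) Z))).
Proof. intros; frege_axiom 7 X Y Z. Qed.

Lemma derivable_bot_elim X : closed X -> derivable (CImp CBot X).
Proof. intros; frege_axiom 8 X CTop CTop. Qed.

Lemma derivable_top : derivable CTop.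
Proof. frege_axiom 9 CTop CTop CTop. Qed.

Lemma derivable_not_intro X : closed X -> derivable (CImp (CImp X CBot) (CNot X)).
Proof. intros; frege_axiom 10 X CTop CTop. Qed.

Lemma derivable_not_elim X : closed X -> derivable (CImp (CNot X) (CImp X CBot)).
Proof. intros; frege_axiom 11 X CTop CTop. Qed.

Lemma derivable_imp_trans X Y Z : derivable (CImp X Y) -> derivable (CImp Y Z) -> derivable (CImp X Z).
Proof.
  intros HXY HYZ.
  destruct (derivable_imp_closed HXY) as [cX cY], (derivable_imp_closed HYZ) as [_ cZ].
  assert (HK : derivable (CImp X (CImp Y Z))).
  { apply (der_mp HYZ), derivable_K; [apply closed_imp|]; auto. }
  exact (der_mp HXY (der_mp HK (derivable_S X Y Z cX cY cZ))).
Qed.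

Lemma derivable_imp_discharge X Y Z : derivable (CImp X (CImp Y Z)) -> derivable Y -> derivable (CImp X Z).
Proof.
  intros HXYZ HY.
  destruct (derivable_imp_closed HXYZ) as [cX cYZ]; apply closed_imp in cYZ as [cY cZ].
  assert (HXY : derivable (CImp X Y)) by exact (der_mp HY (derivable_K Y X cY cX)).
  exact (der_mp HXY (der_mp HXYZ (derivable_S X Y Z cX cY cZ))).
Qed.

Lemma derivable_imp_refl X : closed X -> derivable (CImp X X).
Proof.
  intro cX; assert (cXX : closed (CImp X X)) by (apply closed_imp; auto).
  exact (der_mp (derivable_K X X cX cX)
           (der_mp (derivable_K X (CImp X X) cX cXX) (derivable_S X (CImp X X) X cX cXX cX))).
Qed.

#[local] Hint Resolve closed_ground closed_bot : core.

Lemma derivable_ground v f :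
  if feval v f then derivable (ground v f) else derivable (CImp (ground v f) CBot).
Proof.
  induction f as [n | | | a IHa | a IHa b IHb | a IHa b IHb | a IHa b IHb]; simpl.
  - destruct (v n); [apply derivable_top | apply derivable_bot_elim; auto].
  - apply derivable_top.
  - apply derivable_bot_elim; auto.
  - destruct (feval v a); simpl.
    + eapply derivable_imp_discharge; [apply derivable_not_elim; auto | exact IHa].
    + apply (der_mp IHa), derivable_not_intro; auto.
  - destruct (feval v a), (feval v b); simpl.
    + apply (der_mp IHb), (der_mp IHa), derivable_and_intro; auto.
    + eapply derivable_imp_trans; [apply derivable_and_elim_r; auto | exact IHb].
    + eapply derivable_imp_trans; [apply derivable_and_elim_l; auto | exact IHa].
    + eapply derivable_imp_trans; [apply derivable_and_elim_l; auto | exact IHa].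
  - destruct (feval v a), (feval v b); simpl.
    + apply (der_mp IHa), derivable_or_intro_l; auto.
    + apply (der_mp IHa), derivable_or_intro_l; auto.
    + apply (der_mp IHb), derivable_or_intro_r; auto.
    + apply (der_mp IHb), (der_mp IHa), derivable_or_elim; auto.
  - destruct (feval v a), (feval v b); simpl.
    + apply (der_mp IHb), derivable_K; auto.
    + (* [a] discharges the middle hypothesis of [(a -> b) -> a -> b]. *)
      eapply derivable_imp_trans; [|exact IHb].
      eapply derivable_imp_discharge; [|exact IHa].
      apply derivable_imp_refl, closed_imp; auto.
    + apply (derivable_imp_trans _ _ _ IHa), derivable_bot_elim; auto.
    + apply (derivable_imp_trans _ _ _ IHa), derivable_bot_elim; auto.
Qed.

Lemma derivable_bot_of_falsified A v :
  derivable A -> feval v (unfold [] A) = false -> derivable CBot.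
Proof.
  intros HA Hv.
  assert (Hs : forall n, closed (ground v (FVar n))) by auto.
  assert (HG : derivable (ground v (unfold [] A))).
  { apply (der_unfold _ _ (derivable_inst _ A Hs HA)); auto.
    rewrite (unfold_inst _ (fconst v)), unfold_ground; auto.
    intro n; apply (unfold_ground v (FVar n)). }
  pose proof (derivable_ground v (unfold [] A)) as HK; rewrite Hv in HK.
  exact (der_mp HG HK).
Qed.

Lemma sound_of_not_derivable_bot : ~ derivable CBot -> sound Ax.
Proof.
  intros Hbot pi A HA v.
  destruct (feval v (unfold [] A)) eqn:Hv; [reflexivity|].
  destruct Hbot; exact (derivable_bot_of_falsified A v (proves_derivable _ _ HA) Hv).
Qed.

End Derivability.

Theorem mainTheorem5 (Ax : circ -> bool) :
  ~ sound Ax ->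
  exists c : nat, forall A : circ, closed A ->
    exists pi : list circ, proves Ax pi A /\ plen pi <= c * csize A.
Proof.
  intro Hunsound.
  assert (Hbot : derivable Ax CBot).
  { apply NNPP; intro H; exact (Hunsound (sound_of_not_derivable_bot Ax H)). }
  destruct (derivable_proves Ax CBot Hbot) as [pbot Hpbot].
  exists (plen pbot + 4); intros B HB.
  destruct (frege_instance_axiom Ax 8 B CTop CTop ltac:(simpl; lia) HB eq_refl eq_refl)
    as [Hc Hax].
  exists ((pbot ++ [CImp CBot B]) ++ [B]); split.
  - exact (proves_mp Ax _ _ _ _ Hpbot (proves_axiom Ax _ Hc Hax)).
  - rewrite !plen_app; simpl; pose proof (csize_pos B); nia.
Qed.
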